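(* Let $f$ be a set function on all subsets of $\mathcal{I}$ that is monotone and subadditive over $2^{\mathcal{I}}$, and let $p(\mathbf{Q},E)=f(\overline{\mathcal{S}}_{\mathbf{Q}}(E))$. Then for every non-constant query bundle $\mathbf{Q}\in B(\mathcal{L})$ there exists a database $D\in\mathcal{I}$ such that $p(\mathbf{Q},\mathbf{Q}(D))\ge \tfrac12 f(\mathcal{I}\setminus\{D\})$, i.e. the price of $\mathbf{Q}$ under $D$ is at least half the price of the whole database $D$.
   Context: $\mathcal{I}$ is a countable nonempty set of database instances; queries are deterministic functions on $\mathcal{I}$; a query bundle is a finite tuple of queries from a language $\mathcal{L}$, evaluated componentwise; $B(\mathcal{L})$ is the set of bundles. A bundle $\mathbf{Q}$ is non-constant if $\mathbf{Q}(D_0)\ne\mathbf{Q}(D_1)$ for some $D_0,D_1\in\mathcal{I}$. Conflict set: $\overline{\mathcal{S}}_{\mathbf{Q}}(E)=\{D'\in\mathcal{I}:\mathbf{Q}(D')\ne E\}$. The price of the whole database $D$ is $f(\mathcal{I}\setminus\{D\})$, the price of a bundle revealing $D$ completely. Monotone: $A\subseteq B\Rightarrow f(A)\le f(B)$; subadditive: $f(A\cup B)\le f(A)+f(B)$, for all $A,B\subseteq\mathcal{I}$. *)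

From Stdlib Require Import Reals List.
Open Scope R_scope.

Definition iset (I : Type) := I -> Prop.

Definition query (I O : Type) := I -> O.

Definition bundle_in {I O : Type} (L : query I O -> Prop) (Q : list (query I O)) : Prop :=
  Forall L Q.

Definition eval_bundle {I O : Type} (Q : list (query I O)) (D : I) : list O :=
  map (fun q => q D) Q.

Definition non_constant {I O : Type} (Q : list (query I O)) : Prop :=
  exists D0 D1 : I, eval_bundle Q D0 <> eval_bundle Q D1.

Definition conflict_set {I O : Type} (Q : list (query I O)) (E : list O) : iset I :=
  fun D' => eval_bundle Q D' <> E.

Definition monotone_sf {I : Type} (f : iset I -> R) : Prop :=
  forall A B : iset I, (forall x, A x -> B x) -> f A <= f B.

Definition subadditive_sf {I : Type} (f : iset I -> R) : Prop :=
  forall A B : iset I, f (fun x => A x \/ B x) <= f A + f B.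

Definition price {I O : Type} (f : iset I -> R) (Q : list (query I O)) (E : list O) : R :=
  f (conflict_set Q E).

Definition all_but {I : Type} (D : I) : iset I := fun x => x <> D.

Definition countable (I : Type) : Prop := exists g : I -> nat, forall x y, g x = g y -> x = y.

From Stdlib Require Import Reals List Lra Classical.
Open Scope R_scope.

(* Every instance other than D is in conflict with at least one of two distinct answers, so by monotonicity and subadditivity the two prices together dominate the price of D; the larger of them is then at least half of it. *)

Lemma all_but_sub_conflict_union (I O : Type) (Q : list (query I O)) (D : I)
    (E0 E1 : list O) :
  E0 <> E1 ->
  forall x, all_but D x -> conflict_set Q E0 x \/ conflict_set Q E1 x.
Proof.
  intros Hne x _; unfold conflict_set.
  destruct (classic (eval_bundle Q x = E0)) as [->|Hx]; auto.
Qed.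

Lemma price_all_but_le_add (I O : Type) (f : iset I -> R)
    (Hmono : monotone_sf f) (Hsub : subadditive_sf f)
    (Q : list (query I O)) (D : I) (E0 E1 : list O) :
  E0 <> E1 -> f (all_but D) <= price f Q E0 + price f Q E1.
Proof.
  intros Hne; unfold price.
  eapply Rle_trans; [apply Hmono | apply Hsub].
  exact (all_but_sub_conflict_union I O Q D E0 E1 Hne).
Qed.

Theorem lemma8 (I O : Type) (HI : countable I) (D00 : I)
  (L : query I O -> Prop) (f : iset I -> R)
  (Hmono : monotone_sf f) (Hsub : subadditive_sf f)
  (Q : list (query I O)) (HQ : bundle_in L Q) (Hnc : non_constant Q) :
  exists D : I, price f Q (eval_bundle Q D) >= / 2 * f (all_but D).
Proof.
  destruct Hnc as [D0 [D1 Hne]].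
  destruct (Rle_or_lt (price f Q (eval_bundle Q D1))
                      (price f Q (eval_bundle Q D0))) as [H|H].
  - exists D0.
    pose proof (price_all_but_le_add I O f Hmono Hsub Q D0 _ _ Hne); lra.
  - exists D1.
    pose proof (price_all_but_le_add I O f Hmono Hsub Q D1 _ _ Hne); lra.
Qed.
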